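(* Let $K$ be a perfect field of characteristic $p>0$ and let $\theta:K[x]\to K[x^p]$, $\theta(f)=f^p+\frac{d^{p-1}f}{dx^{p-1}}$ (a bijection). Write $g\in K[x^p]$ as $g=\sum_{i=0}^{p-1}\mu_ix^{pi}$ with $\mu_i\in K[x^{p^2}]$, and write $\theta^{-1}(g)=\sum_{i=0}^{p-1}\lambda_ix^i$ with $\lambda_i\in K[x^p]$. Then (1) for $i=0,1,\dots,p-2$: $\displaystyle \lambda_i=\mu_i^{1/p}+F^{-1}\pi_iF^{-1}\sum_{j\ge0}\Delta^j(\mu_{p-1})$; (2) $\displaystyle \lambda_{p-1}=\sum_{i=0}^{p-2}x^{pi}\,\pi_iF^{-1}\sum_{j\ge0}\Delta^j(\mu_{p-1})+x^{p(p-1)}\sum_{j\ge1}\Delta^j(\mu_{p-1})$.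
   Context: $F^{-1}$ denotes the inverse of the Frobenius, applied to polynomials in $x^p$: $F^{-1}\big(\sum_j c_jx^{pj}\big)=\sum_j c_j^{1/p}x^{j}$ ($c_j\in K$); in particular $\mu_i^{1/p}:=F^{-1}(\mu_i)\in K[x^p]$, and $F^{-1}$ maps $K[x^{p^2}]\to K[x^p]$ and $K[x^p]\to K[x]$. For $i=0,\dots,p-1$, $\pi_i:K[x^p]\to K[x^{p^2}]$ is the map $\sum_{k=0}^{p-1}a_kx^{pk}\mapsto a_i$ ($a_k\in K[x^{p^2}]$), using $K[x^p]=\bigoplus_{k=0}^{p-1}K[x^{p^2}]x^{pk}$ (in the paper it is expressed as $\partial^{[pi]}\prod_{j\ne i}(x^p\partial^{[p]}-j)/\prod_{j\neq i}(i-j)$ with divided-power derivations $\partial^{[m]}=\frac{d^m}{dx^m}/m!$). $\Delta:=\partial^{[(p-1)p]}F^{-1}:K[x^{p^2}]\to K[x^{p^2}]$ is the $\mathbb{F}_p$-linear map $\sum_{i\ge0}a_ix^{p^2i}\mapsto\sum_{i\ge0}a_{p-1+pi}^{1/p}x^{p^2i}$ ($a_i\in K$), where $\partial^{[m]}(x^k)=\binom{k}{m}x^{k-m}$; $\Delta$ is locally nilpotent, so the sums over $j$ are finite. *)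

From HB Require Import structures.
From mathcomp Require Import all_boot all_order all_algebra.
Set Implicit Arguments. Unset Strict Implicit. Unset Printing Implicit Defensive.
Import GRing.Theory.
Local Open Scope ring_scope.

(* All polynomials live in {poly K} = K[x]; the subrings K[x^n] are described
   by the predicate [inXn n]. *)
Definition inXn (K : fieldType) (n : nat) (q : {poly K}) : Prop :=
  forall k : nat, ~~ (n %| k)%N -> q`_k = 0.

Definition theta (K : fieldType) (p : nat) (f : {poly K}) : {poly K} :=
  f ^+ p + f^`(p.-1).

(* F^{-1} : sum_j c_j x^{pj} |-> sum_j c_j^{1/p} x^j, where r is the p-th
   root map of K (inverse of Frobenius). *)
Definition Finv (K : fieldType) (p : nat) (r : K -> K) (h : {poly K}) : {poly K} :=
  \poly_(j < size h) r h`_(j * p).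

(* pi_i : K[x^p] -> K[x^{p^2}],  sum_{k<p} a_k x^{pk} |-> a_i  (a_k in K[x^{p^2}]) *)
Definition pi_ (K : fieldType) (p i : nat) (h : {poly K}) : {poly K} :=
  \poly_(m < size h) (if (p * p %| m)%N then h`_(m + p * i) else 0).

(* Delta : sum_i a_i x^{p^2 i} |-> sum_i a_{p-1+pi}^{1/p} x^{p^2 i} *)
Definition Delta (K : fieldType) (p : nat) (r : K -> K) (h : {poly K}) : {poly K} :=
  \poly_(k < size h)
    (if (p * p %| k)%N then r h`_(p * p * (p - 1 + p * (k %/ (p * p)))) else 0).

(* sum_{j >= 0} Delta^j(h): Delta is locally nilpotent and strictly lowers the
   degree of nonzero elements of K[x^{p^2}], so Delta^j(h) = 0 for j >= size h. *)
Definition sumDelta (K : fieldType) (p : nat) (r : K -> K) (h : {poly K}) : {poly K} :=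
  \sum_(j < size h) iter j (Delta p r) h.

Definition sumDelta1 (K : fieldType) (p : nat) (r : K -> K) (h : {poly K}) : {poly K} :=
  \sum_(1 <= j < size h) iter j (Delta p r) h.

From HB Require Import structures.
From mathcomp Require Import all_boot all_order all_algebra.
From mathcomp Require Import zify.
Import GRing.Theory.
Local Open Scope ring_scope.
Set Implicit Arguments. Unset Strict Implicit.

(* Write L := lambda_{p-1}.  Derivatives vanish on K[x^p] and (p-1)! = -1
   (Wilson), so theta (sum_i lambda_i x^i) = sum_i lambda_i^p x^{pi} - L, and
   comparing K[x^{p^2}]-components gives mu_i = lambda_i^p - pi_i L.  Since
   Delta (L^p) = pi_{p-1} L, the last one reads mu_{p-1} = (1 - Delta) L^p, and
   as Delta is additive and lowers degrees, sum_j Delta^j inverts 1 - Delta: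
   sum_j Delta^j mu_{p-1} = L^p.  Applying F^{-1} recovers L, hence (1) from
   lambda_i = F^{-1} (mu_i + pi_i L), and (2) from L = sum_i x^{pi} pi_i L
   together with sum_{j>=1} Delta^j mu_{p-1} = L^p - mu_{p-1} = pi_{p-1} L. *)

Lemma Wilson_pchar (R : nzRingType) (p : nat) :
  p \in [pchar R] -> (p.-1)`!%:R = -1 :> R.
Proof.
move=> charRp; apply/eqP; rewrite -addr_eq0 -mulrSr -(dvdn_pcharf charRp).
by rewrite -Wilson ?(pcharf_prime charRp) // prime_gt1 ?(pcharf_prime charRp).
Qed.

Lemma big_ord_recr_pred (V : zmodType) n (F : nat -> V) : (0 < n)%N ->
  \sum_(i < n) F i = \sum_(i < n.-1) F i + F n.-1.
Proof. by case: n => // n _; rewrite big_ord_recr. Qed.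

Lemma derivnMl_deriv0 (R : nzRingType) (q s : {poly R}) n :
  q^`() = 0 -> (q * s)^`(n) = q * s^`(n).
Proof.
move=> q'0; elim: n => [|n IHn]; first by rewrite !derivn0.
by rewrite !derivnS IHn derivM q'0 mul0r add0r.
Qed.

Section CharP.

Variables (K : fieldType) (p : nat).
Hypothesis charKp : p \in [pchar K].

Let p_gt0 : (0 < p)%N := prime_gt0 (pcharf_prime charKp).

Lemma coef_exprp (q : {poly K}) n :
  (q ^+ p)`_n = if (p %| n)%N then q`_(n %/ p) ^+ p else 0.
Proof.
have charKXp : p \in [pchar {poly K}] by rewrite pchar_poly.
rewrite -{1}[q]coefK poly_def -(pFrobenius_autE charKXp) rmorph_sum /=.
under eq_bigr => i _ do
  rewrite pFrobenius_autE -[_ ^+ p]/((q`_i *: 'X^i) ^+ p) exprZn -exprM.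
rewrite coef_sumMXn; case: ifP => [/dvdnP[m ->] | p_n].
  rewrite mulnK // (eq_bigl (fun i : 'I_(size q) => i == m :> nat)); last first.
    by move=> i; rewrite /= eqn_mul2r gtn_eqF.
  rewrite (big_ord1_eq _ (fun j => q`_j ^+ p)); case: ltnP => // q_m.
  by rewrite nth_default // expr0n gtn_eqF.
by rewrite big_pred0 // => i; apply: contraFF p_n => /eqP <-; rewrite dvdn_mull.
Qed.

Lemma inXn_exprp (q : {poly K}) : inXn p q -> inXn (p * p) (q ^+ p).
Proof.
move=> q_p k pp_k; rewrite coef_exprp; case: ifP => // /dvdnP[m def_k].
rewrite q_p ?expr0n ?gtn_eqF //; move: pp_k; apply: contra.
by rewrite def_k mulnK // => /dvdnP[l ->]; rewrite -mulnA dvdn_mull.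
Qed.

Lemma deriv_inXn (q : {poly K}) : inXn p q -> q^`() = 0.
Proof.
move=> q_p; apply/polyP => i; rewrite coef_deriv coef0.
have [p_i | p_Ni] := boolP (p %| i.+1)%N; last by rewrite q_p // mul0rn.
by move: p_i; rewrite (dvdn_pcharf charKp) => /eqP p_i; rewrite -mulr_natr p_i mulr0.
Qed.

Lemma derivn_sum_inXn (lambda : nat -> {poly K}) :
  (forall i, inXn p (lambda i)) ->
  (\sum_(i < p) lambda i * 'X^i)^`(p.-1) = - lambda p.-1.
Proof.
move=> lambda_p; rewrite raddf_sum.
rewrite (big_ord_recr_pred (fun i => (lambda i * 'X^i)^`(p.-1)) p_gt0) big1.
  by rewrite add0r derivnMl_deriv0 ?deriv_inXn // derivnXn subnn ffactnn expr0
             Wilson_pchar ?pchar_poly // mulrN1.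
move=> i _; rewrite derivnMl_deriv0 ?deriv_inXn // derivnXn ffact_small //.
by rewrite mulr0n mulr0.
Qed.

Lemma exprp_sum (lambda : nat -> {poly K}) :
  (\sum_(i < p) lambda i * 'X^i) ^+ p = \sum_(i < p) lambda i ^+ p * 'X^(p * i).
Proof.
have charKXp : p \in [pchar {poly K}] by rewrite pchar_poly.
rewrite -(pFrobenius_autE charKXp) rmorph_sum; apply: eq_bigr => i _.
by rewrite /= pFrobenius_autE exprMn -exprM mulnC.
Qed.

Lemma theta_sum_inXn (lambda : nat -> {poly K}) :
  (forall i, inXn p (lambda i)) ->
  theta p (\sum_(i < p) lambda i * 'X^i)
    = \sum_(i < p) lambda i ^+ p * 'X^(p * i) - lambda p.-1.
Proof. by move=> lambda_p; rewrite /theta exprp_sum derivn_sum_inXn. Qed.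

End CharP.

Section Blocks.

Variables (K : fieldType) (p : nat).
Hypothesis p_gt0 : (0 < p)%N.

Lemma coefMXn_inXn n (a : {poly K}) k : (k < p)%N -> inXn (p * p) a ->
  (a * 'X^(p * k))`_n = if (n %% (p * p) == p * k)%N then a`_(n - p * k)%N else 0.
Proof.
move=> lt_kp a_pp; rewrite coefMXn; case: ltnP => [lt_n_pk | le_pk_n].
  by case: eqP => // def_pk; move: lt_n_pk; rewrite -def_pk ltnNge leq_mod.
case: eqP => // ne_pk; apply: a_pp; apply: contra_notN ne_pk => /dvdnP[m def_n].
have -> : n = m * (p * p) + p * k by lia.
by rewrite modnMDl modn_small // ltn_mul2l p_gt0.
Qed.

Lemma pi_inXn i (L : {poly K}) : inXn (p * p) (pi_ p i L).
Proof. by move=> m pp_Nm; rewrite coef_poly (negbTE pp_Nm) if_same. Qed.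

Lemma coef_pi i (h : {poly K}) m :
  (pi_ p i h)`_m = if (p * p %| m)%N then h`_(m + p * i) else 0.
Proof.
rewrite coef_poly; case: ltnP => // le_h_m; case: ifP => // _.
by rewrite nth_default // (leq_trans le_h_m) ?leq_addr.
Qed.

Lemma piB i (a b : {poly K}) : pi_ p i (a - b) = pi_ p i a - pi_ p i b.
Proof. by apply/polyP => m; rewrite coefB !coef_pi coefB; case: ifP; rewrite ?subr0. Qed.

Lemma pi_sum (a : nat -> {poly K}) i : (i < p)%N -> (forall k, inXn (p * p) (a k)) ->
  pi_ p i (\sum_(k < p) a k * 'X^(p * k)) = a i.
Proof.
move=> lt_ip a_pp; apply/polyP => m; rewrite coef_pi.
case: ifP => [/dvdnP[q def_m] | /negbT pp_Nm]; last by rewrite a_pp.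
have mod_m : ((m + p * i) %% (p * p) = p * i)%N.
  by rewrite def_m modnMDl modn_small // ltn_mul2l p_gt0.
rewrite coef_sum; under eq_bigr => k _ do
  rewrite (coefMXn_inXn _ (ltn_ord k) (a_pp k)) mod_m eqn_mul2l gtn_eqF //= eq_sym.
by rewrite -big_mkcond (big_ord1_eq _ (fun k => (a k)`_(m + p * i - p * k)%N)) lt_ip addnK.
Qed.

Lemma inXn_decomp (L : {poly K}) : inXn p L ->
  L = \sum_(k < p) pi_ p k L * 'X^(p * k).
Proof.
move=> L_p; apply/polyP => n; rewrite coef_sum.
have coef_block (k : 'I_p) : (pi_ p k L * 'X^(p * k))`_n
    = if (n %% (p * p) == p * k)%N then L`_n else 0.
  rewrite (coefMXn_inXn _ (ltn_ord k) (pi_inXn k L)) coef_pi.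
  case: eqP => // mod_n; have le_pk_n : (p * k <= n)%N by rewrite -mod_n leq_mod.
  by rewrite subnK // -mod_n {1}(divn_eq n (p * p)) addnK dvdn_mull.
rewrite (eq_bigr _ (fun k _ => coef_block k)).
have [/dvdnP[q def_n] | p_Nn] := boolP (p %| n)%N; last first.
  by rewrite big1 => [|k _]; rewrite ?L_p ?if_same.
set k0 := (n %% (p * p) %/ p)%N.
have mod_n : (n %% (p * p) = p * k0)%N.
  by rewrite /k0 mulnC divnK // /dvdn modn_dvdm ?dvdn_mulr // def_n modnMl.
rewrite mod_n; under eq_bigr => k _ do rewrite eqn_mul2l gtn_eqF //= eq_sym.
rewrite -big_mkcond (big_ord1_eq _ (fun=> L`_n)).
by rewrite /k0 ltn_divLR // ltn_mod muln_gt0 p_gt0.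
Qed.

End Blocks.

Section PthRoot.

Variables (K : fieldType) (p : nat) (r : K -> K).
Hypotheses (charKp : p \in [pchar K]) (rK : forall a : K, r a ^+ p = a).

Let p_gt1 : (1 < p)%N := prime_gt1 (pcharf_prime charKp).
Let p_gt0 : (0 < p)%N := prime_gt0 (pcharf_prime charKp).

Lemma exprpK : cancel (fun a : K => a ^+ p) r.
Proof.
by move=> a; apply: (fmorph_inj (pFrobenius_aut charKp)); rewrite /= !pFrobenius_autE rK.
Qed.

Lemma rB (a b : K) : r (a - b) = r a - r b.
Proof.
by apply: (fmorph_inj (pFrobenius_aut charKp)); rewrite rmorphB /= !pFrobenius_autE !rK.
Qed.

Lemma r0 : r 0 = 0.
Proof.
by apply: (fmorph_inj (pFrobenius_aut charKp)); rewrite /= rmorph0 pFrobenius_autE rK.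
Qed.

Lemma rD (a b : K) : r (a + b) = r a + r b.
Proof.
by apply: (fmorph_inj (pFrobenius_aut charKp)); rewrite rmorphD /= !pFrobenius_autE !rK.
Qed.

Lemma coef_Finv (h : {poly K}) j : (Finv p r h)`_j = r h`_(j * p).
Proof.
rewrite coef_poly; case: ltnP => // le_h_j.
by rewrite nth_default ?r0 // (leq_trans le_h_j) ?leq_pmulr.
Qed.

Lemma FinvD (a b : {poly K}) : Finv p r (a + b) = Finv p r a + Finv p r b.
Proof. by apply/polyP => j; rewrite coefD !coef_Finv coefD rD. Qed.

Lemma Finv_exprp (q : {poly K}) : Finv p r (q ^+ p) = q.
Proof.
by apply/polyP => j; rewrite coef_Finv (coef_exprp charKp) dvdn_mull // mulnK // exprpK.
Qed.

Lemma coef_Delta (h : {poly K}) k : (Delta p r h)`_k =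
  if (p * p %| k)%N then r h`_(p * p * (p - 1 + p * (k %/ (p * p)))) else 0.
Proof.
rewrite coef_poly; case: ltnP => // le_h_k; case: ifP => // /dvdnP[q def_k].
rewrite nth_default ?r0 // (leq_trans le_h_k) // def_k mulnK ?muln_gt0 ?p_gt0 //.
nia.
Qed.

Lemma DeltaB (a b : {poly K}) : Delta p r (a - b) = Delta p r a - Delta p r b.
Proof. by apply/polyP => k; rewrite coefB !coef_Delta coefB rB; case: ifP; rewrite ?subr0. Qed.

Lemma iter_DeltaB n (a b : {poly K}) :
  iter n (Delta p r) (a - b) = iter n (Delta p r) a - iter n (Delta p r) b.
Proof. by elim: n => //= n ->; rewrite DeltaB. Qed.

Lemma size_Delta (h : {poly K}) : (size (Delta p r h) <= (size h).-1)%N.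
Proof.
apply/leq_sizeP => k le_k; rewrite coef_Delta; case: ifP => // /dvdnP[q def_k].
rewrite nth_default ?r0 // def_k mulnK ?muln_gt0 ?p_gt0 //.
have lt_q : (q * (p * p) < p * p * (p - 1 + p * q))%N.
  by rewrite mulnC ltn_pmul2l ?muln_gt0 ?p_gt0 //; have := p_gt1; nia.
by rewrite (leq_trans (leqSpred _)) // (leq_ltn_trans _ lt_q) -?def_k.
Qed.

Lemma iter_Delta_size n (h : {poly K}) : (size h <= n)%N -> iter n (Delta p r) h = 0.
Proof.
elim: n h => [|n IHn] h le_h_n; first by apply/eqP; rewrite -size_poly_leq0.
by rewrite iterSr IHn // (leq_trans (size_Delta h)) // -subn1 leq_subLR add1n.
Qed.

Lemma Delta_exprp (L : {poly K}) : Delta p r (L ^+ p) = pi_ p p.-1 L.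
Proof.
apply/polyP => k; rewrite coef_Delta coef_pi; case: ifP => // /dvdnP[q def_k].
rewrite (coef_exprp charKp) dvdn_mulr ?dvdn_mulr // exprpK def_k mulnK ?muln_gt0 ?p_gt0 //.
congr (L`_ _); rewrite -mulnA mulKn //; nia.
Qed.

Lemma sumDelta_subDelta (h : {poly K}) : sumDelta p r (h - Delta p r h) = h.
Proof.
set g := h - Delta p r h.
have le_h_g : (size h <= size g)%N.
  have [-> | h_neq0] := eqVneq h 0; first by rewrite size_poly0.
  have lt_Delta_h : (size (Delta p r h) < size h)%N.
    by rewrite (leq_ltn_trans (size_Delta h)) // prednK // size_poly_gt0.
  by rewrite /g size_polyDl ?size_polyN.
rewrite /sumDelta; under eq_bigr => j _ do rewrite iter_DeltaB -iterSr -opprB.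
rewrite sumrN -(big_mkord xpredT (fun j => iter j.+1 _ h - iter j _ h)).
by rewrite telescope_sumr // iter_Delta_size //= sub0r opprK.
Qed.

Lemma sumDelta1E (h : {poly K}) : sumDelta1 p r h = sumDelta p r h - h.
Proof.
rewrite /sumDelta /sumDelta1 -(big_mkord xpredT); apply/eqP; rewrite eq_sym subr_eq.
have [-> | h_neq0] := eqVneq h 0; first by rewrite size_poly0 !big_geq ?addr0.
by rewrite big_ltn ?size_poly_gt0 // addrC.
Qed.

End PthRoot.

Section ThetaInverse.

Variables (K : fieldType) (p : nat) (r : K -> K).
Hypotheses (charKp : p \in [pchar K]) (rK : forall a : K, r a ^+ p = a).
Variables (mu lambda : nat -> {poly K}).
Hypotheses (mu_pp : forall i, inXn (p * p) (mu i)) (lambda_p : forall i, inXn p (lambda i)).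
Hypothesis theta_lambda :
  theta p (\sum_(i < p) lambda i * 'X^i) = \sum_(i < p) mu i * 'X^(p * i).

Let p_gt0 : (0 < p)%N := prime_gt0 (pcharf_prime charKp).

Lemma theta_coords i : (i < p)%N -> mu i = lambda i ^+ p - pi_ p i (lambda p.-1).
Proof.
move=> lt_ip; rewrite -(pi_sum p_gt0 lt_ip mu_pp) -theta_lambda.
rewrite theta_sum_inXn // piB (@pi_sum _ _ p_gt0 (fun k => lambda k ^+ p)) // => k.
exact: inXn_exprp.
Qed.

Lemma sumDelta_mu_last : sumDelta p r (mu p.-1) = lambda p.-1 ^+ p.
Proof.
rewrite theta_coords ?prednK ?leqnn // -(Delta_exprp charKp rK).
exact: sumDelta_subDelta.
Qed.

End ThetaInverse.

Unset Implicit Arguments.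

Theorem proposition2p2 (K : fieldType) (p : nat) (r : K -> K)
  (charKp : p \in [pchar K])
  (hr : forall a : K, r a ^+ p = a)
  (f : {poly K})
  (mu lambda : nat -> {poly K})
  (hmu : forall i, inXn (p * p) (mu i))
  (hg : theta p f = \sum_(i < p) mu i * 'X^(p * i))
  (hlam : forall i, inXn p (lambda i))
  (hf : f = \sum_(i < p) lambda i * 'X^i) :
  (forall i : nat, (i < p - 1)%N ->
     lambda i = Finv p r (mu i)
                + Finv p r (pi_ p i (Finv p r (sumDelta p r (mu (p - 1)%N)))))
  /\
  lambda (p - 1)%N =
    \sum_(i < p - 1) 'X^(p * i) * pi_ p i (Finv p r (sumDelta p r (mu (p - 1)%N)))
    + 'X^(p * (p - 1)) * sumDelta1 p r (mu (p - 1)%N).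
Proof.
have p_gt0 : (0 < p)%N := prime_gt0 (pcharf_prime charKp).
rewrite hf in hg; have mu_coords := theta_coords charKp hmu hlam hg.
rewrite subn1 sumDelta1E // (sumDelta_mu_last charKp hr hmu hlam hg) Finv_exprp //.
split=> [i lt_i_p1 | ].
  rewrite -FinvD // mu_coords ?subrK ?Finv_exprp //.
  by rewrite (leq_trans lt_i_p1) ?leq_pred.
rewrite mu_coords ?prednK // opprB subrKC.
rewrite {1}(inXn_decomp p_gt0 (hlam p.-1)).
rewrite (big_ord_recr_pred (fun k => pi_ p k (lambda p.-1) * 'X^(p * k)) p_gt0).
by rewrite mulrC; congr (_ + _); apply: eq_bigr => i _; rewrite mulrC.
Qed.
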